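(* Let $\mathsf{K}$ be a congruence permutable variety and $\mathbf{B}\in\mathsf{K}$. If some subalgebra $\mathbf{A}\leq\mathbf{B}$ is fully epic in $\mathsf{K}$, then $\mathbf{B}$ is finitely subdirectly irreducible.
   Context: A variety is congruence permutable if $\theta_1\circ\theta_2=\theta_2\circ\theta_1$ for all congruences of every member. An algebra is finitely subdirectly irreducible (FSI) if it is nontrivial and its identity congruence is not the intersection of two congruences both different from the identity. $\mathbf{A}\leq\mathbf{B}$ is epic in $\mathsf{K}$ if for all $\mathbf{C}\in\mathsf{K}$ and homomorphisms $g,h\colon\mathbf{B}\to\mathbf{C}$, $g{\upharpoonright}_A=h{\upharpoonright}_A$ implies $g=h$; it is full in $\mathsf{K}$ if it is proper, almost total ($B=\mathrm{Sg}^{\mathbf{B}}(A\cup\{b\})$ for some $b$), and every congruence $\theta\neq\mathrm{id}_B$ of $\mathbf{B}$ relates each $b\in B$ to some $a\in A$; fully epic means full and epic. *)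

From mathcomp Require Import ssreflect ssrfun ssrbool eqtype ssrnat fintype.
Set Implicit Arguments. Unset Strict Implicit. Unset Printing Implicit Defensive.

Record signature := Signature { ops :> Type; arity : ops -> nat }.

Section UA.
Variable sg : signature.

Record algebra := Algebra {
  carrier :> Type;
  op : forall f : ops sg, ('I_(arity f) -> carrier) -> carrier }.

Inductive term : Type :=
  | Var : nat -> term
  | App : forall f : ops sg, ('I_(arity f) -> term) -> term.

Fixpoint eval (A : algebra) (v : nat -> A) (t : term) : A :=
  match t with
  | Var n => v n
  | App f args => @op A f (fun i => eval v (args i))
  end.

Definition models (E : term -> term -> Prop) (A : algebra) : Prop :=
  forall s t, E s t -> forall v : nat -> A, eval v s = eval v t.

Definition is_variety (K : algebra -> Prop) : Prop :=
  exists E : term -> term -> Prop, forall A, K A <-> models E A.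

Definition is_congruence (A : algebra) (th : A -> A -> Prop) : Prop :=
  [/\ (forall x, th x x),
      (forall x y, th x y -> th y x),
      (forall x y z, th x y -> th y z -> th x z)
    & (forall f (a b : 'I_(arity f) -> A),
         (forall i, th (a i) (b i)) -> th (@op A f a) (@op A f b))].

Definition rel_comp (T : Type) (r s : T -> T -> Prop) : T -> T -> Prop :=
  fun x z => exists y, r x y /\ s y z.

Definition is_identity_rel (T : Type) (r : T -> T -> Prop) : Prop :=
  forall x y, r x y <-> x = y.

Definition congruence_permutable (K : algebra -> Prop) : Prop :=
  forall A : algebra, K A ->
  forall th1 th2 : A -> A -> Prop, is_congruence th1 -> is_congruence th2 ->
  forall x y, rel_comp th1 th2 x y <-> rel_comp th2 th1 x y.

Definition FSI (A : algebra) : Prop :=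
  (exists x y : A, x <> y) /\
  forall th1 th2 : A -> A -> Prop, is_congruence th1 -> is_congruence th2 ->
    is_identity_rel (fun x y => th1 x y /\ th2 x y) ->
    is_identity_rel th1 \/ is_identity_rel th2.

Definition is_subuniverse (B : algebra) (S : B -> Prop) : Prop :=
  forall f (a : 'I_(arity f) -> B), (forall i, S (a i)) -> S (@op B f a).

Definition is_subalgebra (B : algebra) (S : B -> Prop) : Prop :=
  is_subuniverse S /\ exists x, S x.

Definition Sg (B : algebra) (X : B -> Prop) : B -> Prop :=
  fun x => forall S : B -> Prop, is_subuniverse S -> (forall y, X y -> S y) -> S x.

Definition is_hom (B C : algebra) (h : B -> C) : Prop :=
  forall f (a : 'I_(arity f) -> B), h (@op B f a) = @op C f (fun i => h (a i)).

Definition epic_in (K : algebra -> Prop) (B : algebra) (A : B -> Prop) : Prop :=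
  forall C : algebra, K C -> forall g h : B -> C, is_hom g -> is_hom h ->
    (forall a, A a -> g a = h a) -> forall b, g b = h b.

(* A <= B is full in K (the condition does not depend on K). *)
Definition full_in (K : algebra -> Prop) (B : algebra) (A : B -> Prop) : Prop :=
  [/\ (exists b, ~ A b),
      (exists b, forall x, Sg (fun y => A y \/ y = b) x)
    & (forall th : B -> B -> Prop, is_congruence th -> ~ is_identity_rel th ->
         forall b, exists a, A a /\ th b a)].

Definition fully_epic_in (K : algebra -> Prop) (B : algebra) (A : B -> Prop) :=
  full_in K A /\ epic_in K A.

End UA.

(* Suppose th1, th2 are nontrivial congruences of B meeting in the identity.
   Fullness makes every class of each of them meet A, so choosing
   representatives in A gives two homomorphisms g, h from B to the quotient of
   A by the join th1|A o th2|A, which is a congruence by permutability.  Both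
   agree with the canonical projection on A, so epicness forces g b = h b for
   every b; unfolding this yields a point of A that is both th1- and
   th2-related to b, hence equal to b.  Thus A = B, contradicting properness. *)
From Stdlib Require Import ClassicalEpsilon FunctionalExtensionality.
From Stdlib Require Import PropExtensionality ProofIrrelevance Classical.
From mathcomp Require Import ssreflect ssrfun ssrbool eqtype ssrnat fintype.
Set Implicit Arguments. Unset Strict Implicit.

Lemma sig_inj (T : Type) (P : T -> Prop) (x y : {z | P z}) :
  proj1_sig x = proj1_sig y -> x = y.
Proof. apply: eq_sig_hprop => ? ? ?; exact: proof_irrelevance. Qed.

Section Quotient.
Variables (sg : signature) (X : algebra sg) (chi : X -> X -> Prop).
Hypothesis chiC : is_congruence chi.

Definition quot_carrier := {P : X -> Prop | exists x, P = chi x}.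

Definition cls (x : X) : quot_carrier := exist _ (chi x) (ex_intro _ x erefl).

Definition repr (P : quot_carrier) : X :=
  proj1_sig (constructive_indefinite_description _ (proj2_sig P)).

Lemma cls_eq x y : chi x y -> cls x = cls y.
Proof.
case: chiC => _ chi_sym chi_trans _ xy; apply: sig_inj => /=.
apply: functional_extensionality => z; apply: propositional_extensionality.
split; [exact: chi_trans (chi_sym _ _ xy) | exact: chi_trans xy].
Qed.

Lemma eq_cls x y : cls x = cls y -> chi x y.
Proof. by case: chiC => chi_refl _ _ _ /(f_equal (@proj1_sig _ _)) /= ->. Qed.

Lemma cls_repr P : cls (repr P) = P.
Proof.
apply: sig_inj; rewrite /repr /=.
by case: (constructive_indefinite_description _ _).
Qed.

Lemma repr_cls x : chi (repr (cls x)) x.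
Proof. by apply: eq_cls; rewrite cls_repr. Qed.

Definition quot_op f (a : 'I_(arity f) -> quot_carrier) : quot_carrier :=
  cls (op (fun i => repr (a i))).

Definition quot_algebra := @Algebra sg quot_carrier quot_op.

Lemma eval_quot (v : nat -> quot_algebra) t :
  eval v t = cls (eval (fun n => repr (v n)) t).
Proof.
elim: t => [n|f args IH] /=; first by rewrite cls_repr.
apply: cls_eq; case: chiC => _ _ _ chi_op; apply: chi_op => i.
by rewrite IH; exact: repr_cls.
Qed.

Lemma variety_quot (K : algebra sg -> Prop) :
  is_variety K -> K X -> K quot_algebra.
Proof.
case=> E KE /KE XE; apply/KE => s t st v.
by rewrite !eval_quot; congr cls; exact: XE.
Qed.

End Quotient.

Section Subalgebra.
Variables (sg : signature) (B : algebra sg) (A : B -> Prop).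
Hypothesis subA : is_subuniverse A.

Definition sub_carrier := {x : B | A x}.

Definition sub_op f (a : 'I_(arity f) -> sub_carrier) : sub_carrier :=
  exist _ (op (fun i => proj1_sig (a i))) (subA (fun i => proj2_sig (a i))).

Definition sub_algebra := @Algebra sg sub_carrier sub_op.

Lemma eval_sub (v : nat -> sub_algebra) t :
  proj1_sig (eval v t) = eval (fun n => proj1_sig (v n)) t.
Proof.
elim: t => [n|f args IH] //=; congr op.
by apply: functional_extensionality => i; exact: IH.
Qed.

Lemma variety_sub (K : algebra sg -> Prop) :
  is_variety K -> K B -> K sub_algebra.
Proof.
case=> E KE /KE BE; apply/KE => s t st v.
by apply: sig_inj; rewrite !eval_sub; exact: BE.
Qed.

Definition restrict (th : B -> B -> Prop) (x y : sub_algebra) : Prop :=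
  th (proj1_sig x) (proj1_sig y).

Lemma restrict_congruence th : is_congruence th -> is_congruence (restrict th).
Proof.
case=> th_refl th_sym th_trans th_op; split; rewrite /restrict.
- by move=> x; exact: th_refl.
- by move=> x y; exact: th_sym.
- by move=> x y z; exact: th_trans.
- by move=> f a b ab; exact: th_op.
Qed.

Lemma transversal_hom (th : B -> B -> Prop) (chi : sub_algebra -> sub_algebra -> Prop) :
    is_congruence th -> is_congruence chi ->
    (forall b, exists a, A a /\ th b a) ->
    (forall x y, restrict th x y -> chi x y) ->
  exists g : B -> quot_algebra chi,
    [/\ is_hom g,
        forall x, g (proj1_sig x) = cls chi x
      & forall b, exists x, th b (proj1_sig x) /\ g b = cls chi x].
Proof.
move=> [_ th_sym th_trans th_op] chiC thA th_chi.
have [s s_th] : exists s : B -> sub_algebra, forall b, th b (proj1_sig (s b)).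
  have pick b : {x : sub_algebra | th b (proj1_sig x)}.
    have /constructive_indefinite_description [a [Aa ba]] := thA b.
    by exists (exist _ a Aa).
  by exists (fun b => proj1_sig (pick b)) => b; case: (pick b).
have [_ chi_sym chi_trans chi_op] := chiC.
exists (fun b => cls chi (s b)); split.
- move=> f a /=; apply: cls_eq => //; apply: (chi_trans _ (sub_op (fun i => s (a i)))).
    apply: th_chi; apply: th_trans (th_sym _ _ (s_th _)) _.
    by apply: th_op => i; exact: s_th.
  by apply: chi_op => i; apply: chi_sym; exact: repr_cls.
- move=> x; apply: cls_eq => //; apply: th_chi.
  by apply: th_sym; exact: s_th.
- by move=> b; exists (s b).
Qed.

End Subalgebra.

Lemma permutable_comp_congruence (sg : signature) (X : algebra sg)
    (th1 th2 : X -> X -> Prop) :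
    is_congruence th1 -> is_congruence th2 ->
    (forall x y, rel_comp th1 th2 x y <-> rel_comp th2 th1 x y) ->
  is_congruence (rel_comp th1 th2).
Proof.
move=> [refl1 sym1 trans1 op1] [refl2 sym2 trans2 op2] perm; split.
- by move=> x; exists x.
- move=> x y [z [xz zy]]; apply/perm; exists z; split; [exact: sym2 | exact: sym1].
- move=> x y w [z1 [xz1 z1y]] [z2 [yz2 z2w]].
  have [u [z1u uz2]] : rel_comp th1 th2 z1 z2 by apply/perm; exists y.
  by exists u; split; [exact: trans1 xz1 z1u | exact: trans2 uz2 z2w].
- move=> f a b ab.
  have /(_ _)/constructive_indefinite_description mid := ab.
  by exists (op (fun i => proj1_sig (mid i))); split;
    [apply: op1 => i | apply: op2 => i]; case: (mid i) => ? [].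
Qed.

Lemma epic_meet_transversal_total (sg : signature) (K : algebra sg -> Prop)
    (B : algebra sg) (A : B -> Prop) (th1 th2 : B -> B -> Prop) :
    is_variety K -> congruence_permutable K -> K B ->
    is_subuniverse A -> epic_in K A ->
    is_congruence th1 -> is_congruence th2 ->
    is_identity_rel (fun x y => th1 x y /\ th2 x y) ->
    (forall b, exists a, A a /\ th1 b a) ->
    (forall b, exists a, A a /\ th2 b a) ->
  forall b, A b.
Proof.
move=> HK Hcp KB subA epicA C1 C2 meet1 A1 A2 b.
pose t1 := restrict (subA:=subA) th1; pose t2 := restrict (subA:=subA) th2.
have Ct1 : is_congruence t1 by exact: restrict_congruence.
have Ct2 : is_congruence t2 by exact: restrict_congruence.
have [refl1 _ trans1 _] := C1; have [refl2 sym2 trans2 _] := C2.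
have KA : K (sub_algebra subA) by exact: variety_sub.
have Cchi : is_congruence (rel_comp t1 t2).
  exact: permutable_comp_congruence Ct1 Ct2 (Hcp _ KA _ _ Ct1 Ct2).
have [g [hom_g g_A g_b]] :=
  transversal_hom C1 Cchi A1 (fun x y xy => ex_intro _ y (conj xy (refl2 _))).
have [h [hom_h h_A h_b]] :=
  transversal_hom C2 Cchi A2 (fun x y xy => ex_intro _ x (conj (refl1 _) xy)).
have gh : g b = h b.
  apply: epicA hom_g hom_h _ b; first exact: variety_quot.
  by move=> a Aa; rewrite -[a]/(proj1_sig (exist A a Aa)) g_A h_A.
have [x1 [bx1 gbx1]] := g_b b; have [x2 [bx2 hbx2]] := h_b b.
move: gh; rewrite gbx1 hbx2 => /(eq_cls Cchi) [z [x1z zx2]].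
have -> : b = proj1_sig z.
  apply/meet1; split; first exact: trans1 bx1 x1z.
  exact: trans2 bx2 (sym2 _ _ zx2).
exact: proj2_sig z.
Qed.

Theorem mainTheorem12 (sg : signature) (K : algebra sg -> Prop)
  (HK : is_variety K) (Hcp : congruence_permutable K)
  (B : algebra sg) (HB : K B) (A : B -> Prop) (HA : is_subalgebra A)
  (Hfe : fully_epic_in K A) :
  FSI B.
Proof.
case: HA => subA [a0 Aa0]; case: Hfe => [[[b0 nAb0] _ fullA] epicA].
split; first by exists b0, a0 => e; apply: nAb0; rewrite e.
move=> th1 th2 C1 C2 meet1.
case: (classic (is_identity_rel th1)) => [|N1]; first by left.
case: (classic (is_identity_rel th2)) => [|N2]; first by right.
exfalso; apply: nAb0.
exact: (epic_meet_transversal_total HK Hcp HB subA epicA C1 C2 meet1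
          (fullA _ C1 N1) (fullA _ C2 N2)).
Qed.
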